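(* Let $k\ge3$ and let $\{S_n\}$ be a perturbed sequence of weak shifts of degree $d$ corresponding to a uniformly bounded sequence of weak shift-like maps of degree $\tilde d\le d-2$. Let $G_n(z)=d^{-n}\log^+\|S(n)(z)\|_{\sup}$ and let $G$ be the function equal to $\lim_n G_n$ on $U^+$ and to $0$ on $\mathbb{C}^k\setminus U^+$. Then $\{G_n\}$ converges to $G$ uniformly on compact subsets of $\mathbb{C}^k$.
   Context: Let $Q_m(z)=z^m$ and $\mathbf H_d(w_1,\dots,w_{k-1})=\sum_{i=1}^{k-1}w_i^d$. A uniformly bounded sequence of weak shift-like maps of degree $\tilde d\ge1$ is a sequence $\mathsf S_n(z)=(z_2,\dots,z_k,a_nz_1+p_n(z_2,\dots,z_k))$ with $\deg(a_nz_1+p_n)=\tilde d$, $p_n=\sum_i\alpha_{i,n}\mathbf z^i$, and constants $\tilde m,\tilde M>0$ with $\tilde m<|a_n|<\tilde M$, $|\alpha_{i,n}|<\tilde M$. The associated perturbed sequence of weak shifts of degree $d\ge\tilde d+2$ is $S_n(z)=\mathsf S_n(z)+(0,\dots,0,Q_{d-1}(z_2),\mathbf H_d(z_2,\dots,z_k))$. $S(n)=S_n\circ\cdots\circ S_1$; $\|\cdot\|_{\sup}$ is the sup-norm; $\log^+=\max\{\log,0\}$. $U^+=\{z\in\mathbb{C}^k:\overline{S(n)}([z:1])\to[0:\cdots:0:1:0]\}$ (extension to $\mathbb{P}^k$; limit point has only the $k$-th homogeneous coordinate nonzero); the limit $\lim_nG_n$ exists on $U^+$. *)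

From HB Require Import structures.
From mathcomp Require Import all_boot all_order all_algebra.
From mathcomp Require Import all_classical all_reals all_analysis.
From mathcomp Require Import complex.
Import Order.TTheory GRing.Theory Num.Theory.
Import numFieldNormedType.Exports.
Local Open Scope classical_set_scope.
Local Open Scope ring_scope.

Set Implicit Arguments. Unset Strict Implicit. Unset Printing Implicit Defensive.

Section WeakShifts.
Variable R : realType.
Local Notation C := ((R[i])^o).
Variable k : nat.

(* 0-based access to the coordinates of z in C^k : z_{j+1} = coord z j;
   out-of-range indices give 0 (never used below for j >= k). *)
Definition coord (z : 'I_k -> C) (j : nat) : C :=
  if insub j is Some i then z i else 0.

(* p(z_2,...,z_k) = sum_e alpha_e z_2^{e_1} ... z_k^{e_{k-1}},
   monomials with every exponent <= dt (this covers all polynomials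
   of degree <= dt in k-1 variables). *)
Definition pval (dt : nat) (alpha : {ffun 'I_k.-1 -> 'I_dt.+1} -> C)
  (z : 'I_k -> C) : C :=
  \sum_(e : {ffun 'I_k.-1 -> 'I_dt.+1})
     alpha e * \prod_(i : 'I_k.-1) coord z (val i).+1 ^+ e i.

Definition ws_deg (dt : nat) (a : C) (alpha : {ffun 'I_k.-1 -> 'I_dt.+1} -> C)
  : nat :=
  maxn (if a != 0 then 1 else 0)
       (\max_(e | alpha e != 0) \sum_(i : 'I_k.-1) (val (e i))).

(* weak shift-like map  Sf(z) = (z_2,...,z_k, a z_1 + p(z_2,...,z_k)) *)
Definition weak_shift_like (dt : nat) (a : C)
  (alpha : {ffun 'I_k.-1 -> 'I_dt.+1} -> C) (z : 'I_k -> C) : 'I_k -> C :=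
  fun i => if ((val i).+1 < k)%N then coord z (val i).+1
           else a * coord z 0 + pval alpha z.

(* perturbed weak shift of degree d:
   S(z) = Sf(z) + (0,...,0, Q_{d-1}(z_2), H_d(z_2,...,z_k)) *)
Definition weak_shift (d dt : nat) (a : C)
  (alpha : {ffun 'I_k.-1 -> 'I_dt.+1} -> C) (z : 'I_k -> C) : 'I_k -> C :=
  fun i => weak_shift_like a alpha z i
    + (if (val i).+2 == k then coord z 1 ^+ d.-1
       else if (val i).+1 == k then \sum_(1 <= j < k) coord z j ^+ d
       else 0).

Fixpoint comp_seq (S : nat -> ('I_k -> C) -> ('I_k -> C)) (n : nat)
  (z : 'I_k -> C) : 'I_k -> C :=
  match n with
  | 0 => z
  | n'.+1 => S n (comp_seq S n' z)
  end.

Definition sup_norm (z : 'I_k -> C) : R := \big[Num.max/0]_(i : 'I_k) ComplexField.Normc.normc (z i).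

Definition logp (x : R) : R := Num.max (ln x) 0.

Definition Gn (S : nat -> ('I_k -> C) -> ('I_k -> C)) (d n : nat)
  (z : 'I_k -> C) : R :=
  (d%:R ^+ n)^-1 * logp (sup_norm (comp_seq S n z)).

(* U^+ : [S(n)(z) : 1] -> [0:...:0:1:0] in P^k, written in the affine chart
   w_k <> 0 around that point: eventually the k-th coordinate w_k of
   S(n)(z) is nonzero, and all ratios w_j / w_k (j <> k) and 1 / w_k
   tend to 0. *)
Definition Uplus (S : nat -> ('I_k -> C) -> ('I_k -> C)) (z : 'I_k -> C)
  : Prop :=
  (\forall n \near \oo, coord (comp_seq S n z) k.-1 != 0) /\
  (forall j : 'I_k, val j != k.-1 ->
     (fun n => comp_seq S n z j / coord (comp_seq S n z) k.-1) @ \oo --> (0 : C)) /\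
  ((fun n => (coord (comp_seq S n z) k.-1)^-1) @ \oo --> (0 : C)).

Definition Glim (S : nat -> ('I_k -> C) -> ('I_k -> C)) (d : nat)
  (z : 'I_k -> C) : R :=
  if `[< Uplus S z >] then limn (fun n => Gn S d n z) else 0.

End WeakShifts.

From Pilot Require Import Defs.
From HB Require Import structures.
From mathcomp Require Import all_boot all_order all_algebra.
From mathcomp Require Import all_classical all_reals all_analysis.
From mathcomp Require Import complex.
From mathcomp Require Import ring lra.
Import Order.TTheory GRing.Theory Num.Theory.
Import numFieldNormedType.Exports.
Local Open Scope classical_set_scope.
Local Open Scope ring_scope.
(* [vector.coord] from all_algebra shadows [Defs.coord]. *)
Import Defs.
Import ComplexField.Normc.
Set Implicit Arguments. Unset Strict Implicit. Unset Printing Implicit Defensive.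

(* Put X(w) := max(1, ||w||), so that G_n(z) = d^-n ln X(z_n) along the orbit z_n := S(n) z.
   Always ln X(z_(n+1)) <= d ln X(z_n) + c_1.  Let T be the set of points whose last
   coordinate is large and exceeds 4k times each other coordinate.  T is invariant under
   every S_n, and on T the last coordinate is essentially raised to the power d, so that
   |ln X(z_(n+1)) - d ln X(z_n)| <= ln 2.  Outside T the coordinates of S_(n+1) w are
   O(X(w)^(d-1)), so ln X(z_(n+1)) <= (d-1) ln X(z_n) + c_2 as long as z_(n+1) is not in T.
   Hence d^-n ln X(z_n) converges, with error at most ((d-1)/d)^n (ln X(z) + c), which is
   uniform on compact sets; the limit vanishes unless the orbit enters T, and orbits
   entering T lie in U^+. *)

Section RenormalizedLimit.
Variable R : realType.

Lemma cvg_of_halving_steps (G u : R ^nat) :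
  (forall n, 0 <= G n) -> u @ \oo --> 0 -> (forall n, u n.+1 *+ 2 <= u n) ->
  (forall n, `|G n.+1 - G n| <= u n.+1) ->
  exists2 L, G @ \oo --> L & forall n, `|G n - L| <= u n.
Proof.
move=> G_ge0 u0 u_half G_step.
have u_ge0 n : 0 <= u n.
  by apply: le_trans (u_half n); rewrite mulrn_wge0 // (le_trans _ (G_step n)).
have G_bounds n : - u n.+1 <= G n.+1 - G n <= u n.+1 by rewrite -ler_norml.
pose g n := G n + u n; pose h n := G n - u n.
have g_noninc : nonincreasing_seq g.
  apply/nonincreasing_seqP => n; rewrite /g.
  by have := G_bounds n; have := u_half n; rewrite mulr2n => ? /andP[? ?]; lra.
have h_nondec : nondecreasing_seq h.
  apply/nondecreasing_seqP => n; rewrite /h.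
  by have := G_bounds n; have := u_half n; rewrite mulr2n => ? /andP[? ?]; lra.
have g_cvg : cvgn g.
  by apply: (nonincreasing_is_cvgn g_noninc); exists 0 => _ [n _ <-]; rewrite addr_ge0.
have GL : G @ \oo --> limn g.
  have -> : G = (fun n => g n - u n) by apply: funext => n; rewrite /g addrK.
  by rewrite -[limn g]subr0; apply: cvgB.
have hL : h @ \oo --> limn g by rewrite -[limn g]subr0; apply: cvgB.
exists (limn g) => // n; rewrite ler_norml.
have := nonincreasing_cvgn_ge g_noninc g_cvg n.
have := nondecreasing_cvgn_le h_nondec (cvgP _ hL) n; rewrite (cvg_lim _ hL) //.
by rewrite /g /h => ? ?; apply/andP; split; lra.
Qed.

Variables (d : nat) (lam : R ^nat) (P : pred nat) (c1 c2 c3 : R).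
Hypotheses (d_ge3 : (3 <= d)%N) (c1_ge0 : 0 <= c1) (c2_ge0 : 0 <= c2) (c3_ge0 : 0 <= c3).
Hypothesis lam_ge0 : forall n, 0 <= lam n.
Hypothesis P_succ : forall n, P n -> P n.+1.
Hypothesis lam_succ_le : forall n, lam n.+1 <= c1 + d%:R * lam n.
Hypothesis lam_succ_notP : forall n, ~~ P n.+1 -> lam n.+1 <= c2 + (d%:R - 1) * lam n.
Hypothesis lam_succ_P : forall n, P n -> `|lam n.+1 - d%:R * lam n| <= c3.

Local Notation D := (d%:R : R).
Local Notation rho := ((D - 1) / D).
Local Notation G n := ((D ^+ n)^-1 * lam n).

Let D_ge3 : 3 <= D. Proof. by rewrite (ler_nat R 3 d). Qed.
Let D_gt0 : 0 < D. Proof. by apply: lt_le_trans D_ge3. Qed.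
Let invDX_gt0 n : 0 < (D ^+ n)^-1. Proof. by rewrite invr_gt0 exprn_gt0. Qed.
Let rho_ge0 : 0 <= rho. Proof. by rewrite divr_ge0 //; have := D_ge3; lra. Qed.
Let rho_lt1 : rho < 1. Proof. by rewrite ltr_pdivrMr // mul1r; have := D_ge3; lra. Qed.
Let G_ge0 n : 0 <= G n. Proof. by rewrite mulr_ge0 // ltW. Qed.

Lemma lam_notP_le n : ~~ P n -> lam n + c2 <= (D - 1) ^+ n * (lam 0 + c2).
Proof.
elim: n => [|n IH] notP; first by rewrite expr0 mul1r.
have notPn : ~~ P n by apply: contra notP; apply: P_succ.
apply: (@le_trans _ _ ((D - 1) * (lam n + c2))).
  have := lam_succ_notP notP.
  have : 2 * c2 <= (D - 1) * c2 by rewrite ler_wpM2r //; have := D_ge3; lra.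
  lra.
by rewrite exprS -mulrA ler_wpM2l ?IH //; have := D_ge3; lra.
Qed.

Lemma renorm_notP_le n : ~~ P n -> G n <= rho ^+ n * (lam 0 + c2).
Proof.
move=> notP; rewrite expr_div_n mulrAC [_ * (D ^+ n)^-1]mulrC.
apply: ler_wpM2l; first exact: ltW.
by apply: le_trans _ (lam_notP_le notP); rewrite lerDl.
Qed.

Lemma invDX_le_rhoX m n : (n <= m)%N -> (D ^+ m)^-1 <= rho ^+ n.
Proof.
move=> nm; rewrite expr_div_n; apply: (@le_trans _ _ (D ^+ n)^-1).
  by rewrite lef_pV2 ?posrE ?exprn_gt0 // ler_weXn2l //; have := D_ge3; lra.
by rewrite -[X in X <= _]mul1r ler_wpM2r ?(ltW (invDX_gt0 n)) // exprn_ege1 //; have := D_ge3; lra.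
Qed.

Lemma renorm_step_P n : P n -> `|G n.+1 - G n| <= (D ^+ n.+1)^-1 * c3.
Proof.
move=> Pn; have -> : G n.+1 - G n = (D ^+ n.+1)^-1 * (lam n.+1 - D * lam n).
  by rewrite exprS; field; rewrite expf_neq0 // gt_eqF.
by rewrite normrM ger0_norm ?(ltW (invDX_gt0 _)) // ler_wpM2l ?(ltW (invDX_gt0 _)) // lam_succ_P.
Qed.

Lemma renorm_succ_notP_le m n : ~~ P m -> (n <= m)%N ->
  G m.+1 <= rho ^+ n * (c1 + (lam 0 + c2)).
Proof.
move=> notP nm.
apply: (@le_trans _ _ ((D ^+ m.+1)^-1 * (c1 + D * lam m))).
  by apply: ler_wpM2l; [exact: ltW | exact: lam_succ_le].
have -> : (D ^+ m.+1)^-1 * (c1 + D * lam m) = (D ^+ m.+1)^-1 * c1 + G m.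
  by rewrite exprS; field; rewrite expf_neq0 // gt_eqF.
rewrite mulrDr lerD //; first by rewrite ler_wpM2r // invDX_le_rhoX // leqW.
apply: le_trans (renorm_notP_le notP) _; apply: ler_wpM2r; first exact: addr_ge0.
by apply: (ler_wiXn2l rho_ge0 (ltW rho_lt1)).
Qed.

Lemma renorm_cvg_first_P tau : P tau -> (forall n, (n < tau)%N -> ~~ P n) ->
  exists2 L, (fun n => G n) @ \oo --> L &
    forall n, `|G n - L| <= rho ^+ n * (lam 0 + c1 + c2 + c3).
Proof.
move=> Ptau before.
have P_after m : P (m + tau)%N.
  by elim: m => [|m IH]; [rewrite add0n | rewrite addSn; apply: P_succ].
pose u m := (D ^+ m)^-1 * c3.
have u_cvg : u @ \oo --> 0.
  have -> : u = (fun m => D^-1 ^+ m * c3) by apply: funext => m; rewrite /u exprVn.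
  rewrite -(mul0r c3); apply: cvgMr_tmp; apply: cvg_expr.
  by rewrite ger0_norm ?invr_ge0 ?(ltW D_gt0) // invf_lt1 //; have := D_ge3; lra.
have u_half m : u m.+1 *+ 2 <= u m.
  rewrite /u mulr2n -mulrDl ler_wpM2r // exprS invfM -mulrDl.
  rewrite -[X in _ <= X]mul1r ler_wpM2r ?(ltW (invDX_gt0 m)) //.
  by rewrite -div1r -mulrDl ler_pdivrMr // mul1r; have := D_ge3; lra.
have u_shift_cvg : (fun m => u (m + tau)%N) @ \oo --> 0.
  by rewrite -(cvg_shiftn tau) in u_cvg.
have [L GL GLb] := @cvg_of_halving_steps (fun m => G (m + tau)%N) (fun m => u (m + tau)%N)
  (fun m => G_ge0 _) u_shift_cvg (fun m => u_half (m + tau)%N)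
  (fun m => renorm_step_P (P_after m)).
exists L; first by rewrite -(cvg_shiftn tau).
have u_le n m : (n <= m)%N -> u m <= rho ^+ n * c3.
  by move=> nm; rewrite /u ler_wpM2r // invDX_le_rhoX.
move=> n; have rhoX_ge0 := exprn_ge0 n rho_ge0.
have rho_c1_ge0 := mulr_ge0 rhoX_ge0 c1_ge0.
have rho_lam_ge0 := mulr_ge0 rhoX_ge0 (addr_ge0 (lam_ge0 0) c2_ge0).
have -> : rho ^+ n * (lam 0 + c1 + c2 + c3) =
    rho ^+ n * (lam 0 + c2) + rho ^+ n * c1 + rho ^+ n * c3 by ring.
case: (leqP tau n) => [tau_le | n_lt].
  have := GLb (n - tau)%N; rewrite /= subnK // => G_near.
  by apply: le_trans G_near (le_trans (u_le n n (leqnn n)) _); lra.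
have tau_gt0 : (0 < tau)%N := leq_ltn_trans (leq0n n) n_lt.
have G_tau : G tau <= rho ^+ n * c1 + rho ^+ n * (lam 0 + c2).
  rewrite -mulrDr -(prednK tau_gt0); apply: renorm_succ_notP_le.
    by apply: before; rewrite ltn_predL.
  by rewrite -ltnS prednK.
have := GLb 0; rewrite /= add0n ler_norml => /andP[L_ge L_le].
have := renorm_notP_le (before n n_lt); have := u_le n tau (ltnW n_lt).
have := G_ge0 n; have := G_ge0 tau.
by rewrite ler_norml => *; apply/andP; split; lra.
Qed.

Lemma renorm_cvg : exists L : R, (fun n => G n) @ \oo --> L /\
  (forall n, `|G n - L| <= rho ^+ n * (lam 0 + c1 + c2 + c3)) /\
  ((forall n, ~~ P n) -> L = 0).
Proof.
have [[m Pm]|never] := pselect (exists n, P n).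
  case: (ex_minnP (ex_intro _ m Pm)) => tau Ptau tau_min.
  have before n : (n < tau)%N -> ~~ P n.
    by move=> n_lt; apply/negP => /tau_min; rewrite leqNgt n_lt.
  have [L GL GLb] := renorm_cvg_first_P Ptau before.
  by exists L; split => //; split => // notP; move: (notP tau); rewrite Ptau.
have notP n : ~~ P n by apply/negP => Pn; apply: never; exists n.
have rhoX_ge0 n := exprn_ge0 n rho_ge0.
exists 0; split; [|split => // n].
  apply: (@squeeze_cvgr _ _ _ _ (cst 0) (fun n => rho ^+ n * (lam 0 + c2))).
  - by apply: nearW => n; rewrite G_ge0 renorm_notP_le.
  - exact: cvg_cst.
  rewrite -(mul0r (lam 0 + c2)); apply: cvgMr_tmp; apply: cvg_expr.
  by rewrite ger0_norm.
rewrite subr0 ger0_norm //; apply: le_trans (renorm_notP_le (notP n)) _.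
by rewrite ler_wpM2l //; move: c1_ge0 c3_ge0; lra.
Qed.

End RenormalizedLimit.

Lemma big_nat_recr_pred (V : nmodType) m n (F : nat -> V) : (m < n)%N ->
  \sum_(m <= j < n) F j = \sum_(m <= j < n.-1) F j + F n.-1.
Proof. by move=> mn; rewrite -{1}(ltn_predK mn) big_nat_recr // -ltnS (ltn_predK mn). Qed.

Section LogBounds.
Variable R : realType.

Lemma ln_le_lnM_expr (c x y : R) m : 0 < c -> 0 < x -> 0 < y ->
  y <= c * x ^+ m -> ln y <= ln c + m%:R * ln x.
Proof.
move=> c_gt0 x_gt0 y_gt0 y_le.
have cx_gt0 : 0 < c * x ^+ m by rewrite mulr_gt0 ?exprn_gt0.
by rewrite mulr_natl -lnXn // -lnM ?posrE ?exprn_gt0 // ler_ln ?posrE.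
Qed.

Lemma ln_dist_expr (x y : R) m : 0 < x -> x ^+ m / 2 <= y <= 2 * x ^+ m ->
  `|ln y - m%:R * ln x| <= ln 2.
Proof.
move=> x_gt0 /andP[y_ge y_le].
have xm_gt0 : 0 < x ^+ m / 2 by rewrite divr_gt0 ?exprn_gt0.
have y_gt0 : 0 < y := lt_le_trans xm_gt0 y_ge.
have := ln_le_lnM_expr (ltr0n _ 2) x_gt0 y_gt0 y_le.
have : ln (x ^+ m / 2) <= ln y by rewrite ler_ln ?posrE.
rewrite ln_div ?posrE ?exprn_gt0 // lnXn // -mulr_natl ler_norml.
by move=> ? ?; apply/andP; split; lra.
Qed.

End LogBounds.

Section ComplexNorm.
Local Open Scope complex_scope.
Local Open Scope ring_scope.
Variable R : rcfType.
Implicit Types x y : R[i].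

Lemma normc_ge0 x : 0 <= normc x.
Proof. by case: x => a b; apply: sqrtr_ge0. Qed.

Lemma normcX x n : normc (x ^+ n) = normc x ^+ n.
Proof. by elim: n => [|n IH]; rewrite ?expr0 ?normc1 // !exprS normcM IH. Qed.

Lemma normcB x y : normc (x - y) = normc (y - x).
Proof. by rewrite -normcN opprB. Qed.

Lemma normc_sum_le (I : Type) (r : seq I) (P : pred I) (F : I -> R[i]) :
  normc (\sum_(i <- r | P i) F i) <= \sum_(i <- r | P i) normc (F i).
Proof.
elim/big_rec2: _ => [|i x y _ le_xy]; first by rewrite normc0.
by apply: le_trans (le_normcD _ _) _; rewrite lerD2l.
Qed.

Lemma normc_prod (I : Type) (r : seq I) (P : pred I) (F : I -> R[i]) :
  normc (\prod_(i <- r | P i) F i) = \prod_(i <- r | P i) normc (F i).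
Proof.
by elim/big_rec2: _ => [|i x y _ <-]; [exact: normc1 | exact: normcM].
Qed.

Lemma norm_normc x : `|x| = (normc x)%:C.
Proof. by case: x. Qed.

End ComplexNorm.

Section ComplexConvergence.
Local Open Scope complex_scope.
Local Open Scope ring_scope.
Variable R : realType.

Lemma cvg0_normc (f : nat -> (R[i])^o) (b : R ^nat) :
  b @ \oo --> 0 -> (forall n, normc (f n) <= b n) -> f @ \oo --> 0.
Proof.
move=> b0 f_le; apply/cvgr0Pnorm_lt => e; rewrite ltcE /= => /andP[/eqP Im0 Re_gt0].
apply: filterS (cvgr0_norm_lt _ b0 _ Re_gt0) => n /= bn.
rewrite norm_normc ltcE /= Im0 eqxx /=.
exact: le_lt_trans (f_le n) (le_lt_trans (ler_norm _) bn).
Qed.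

Lemma compact_normc_bounded (A : set (R[i])^o) :
  compact A -> exists B : R, forall x, A x -> normc x <= B.
Proof.
rewrite compact_cover => cA.
have disc_open (M : nat) : open [set x : (R[i])^o | normc x < M%:R].
  rewrite openE => x /= xM.
  have e_gt0 : 0 < (M%:R - normc x)%:C :> R[i] by rewrite ltcR subr_gt0.
  move: (@cvg_id _ (nbhs x)) => /cvgr_dist_lt /(_ _ e_gt0); apply: filterS => y /=.
  rewrite norm_normc ltcR => xy; have := le_normcD x (y - x).
  by rewrite addrC subrK normcB; lra.
have A_cover : A `<=` \bigcup_(M in setT) [set x | normc x < M%:R].
  by move=> x _; exists (Num.truncn (normc x)).+1 => //=; apply: truncnS_gt.
have [D _ DA] := cA _ _ _ (fun M _ => disc_open M) A_cover.
exists (\max_(M <- finmap.enum_fset D) M)%:R => x /DA [M MD /= xM].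
by rewrite (le_trans (ltW xM)) // ler_nat leq_bigmax_seq.
Qed.

End ComplexConvergence.

Section SupNorm.
Variables (R : realType) (k : nat).
Implicit Types z : 'I_k -> (R[i])^o.

Lemma coord_ord z (i : 'I_k) : coord z i = z i.
Proof. by rewrite /coord valK. Qed.

Lemma coord_lt z j (j_lt : (j < k)%N) : coord z j = z (Ordinal j_lt).
Proof. by rewrite /coord insubT. Qed.

Lemma normc_coord_le_sup z j : normc (coord z j) <= sup_norm z.
Proof.
rewrite /coord; case: insubP => [i _ _|_]; first exact: le_bigmax.
by rewrite normc0; apply: bigmax_ge_id.
Qed.

Lemma sup_norm_le z X : 0 <= X ->
  (forall j, (j < k)%N -> normc (coord z j) <= X) -> sup_norm z <= X.
Proof.
move=> X_ge0 coord_le; apply: bigmax_le => // i _.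
by rewrite -coord_ord coord_le.
Qed.

Definition xnorm z : R := Num.max 1 (sup_norm z).

Lemma xnorm_ge1 z : 1 <= xnorm z.
Proof. by rewrite le_max lexx. Qed.

Lemma xnorm_gt0 z : 0 < xnorm z.
Proof. exact: lt_le_trans (xnorm_ge1 z). Qed.

Lemma normc_coord_le_xnorm z j : normc (coord z j) <= xnorm z.
Proof. by rewrite le_max normc_coord_le_sup orbT. Qed.

Lemma xnorm_le z X : 1 <= X -> normc (coord z k.-1) <= X ->
  (forall j, (j < k.-1)%N -> normc (coord z j) <= X) -> xnorm z <= X.
Proof.
move=> X_ge1 last_le coord_le; rewrite ge_max X_ge1 sup_norm_le //; first exact: le_trans X_ge1.
move=> j j_lt; case: (ltnP j k.-1) => [|j_ge]; first exact: coord_le.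
suff -> : j = k.-1 by [].
by apply/eqP; rewrite eqn_leq j_ge -ltnS (leq_trans j_lt) // leqSpred.
Qed.

Lemma logp_sup_norm z : logp (sup_norm z) = ln (xnorm z).
Proof.
rewrite /logp /xnorm; case: (leP 1 (sup_norm z)) => [sup_ge1|sup_lt1].
  by rewrite max_l // ln_ge0.
by rewrite ln1 max_r // ln_le0 // ltW.
Qed.

Lemma compact_xnorm_bounded (K : set {ptws 'I_k -> (R[i])^o}) :
  compact K -> exists B, forall z, K z -> xnorm z <= B.
Proof.
move=> cK.
have coord_bounded (i : 'I_k) : exists B, forall z, K z -> normc (z i) <= B.
  have proj_cont : {within K, continuous (@proj 'I_k (fun _ => (R[i])^o) i)}.
    exact/continuous_subspaceT/proj_continuous.
  have [B le_B] := compact_normc_bounded (continuous_compact proj_cont cK).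
  by exists B => z Kz; apply: le_B; exists z.
have [B le_B] := boolp.choice coord_bounded.
exists (1 + \big[Num.max/0]_i B i) => z Kz.
have max_ge0 : 0 <= \big[Num.max/0]_i B i by apply: bigmax_ge_id.
rewrite ge_max lerDl max_ge0 sup_norm_le //; first exact: addr_ge0.
move=> j j_lt; rewrite coord_lt.
apply: le_trans (le_B _ z Kz) _.
by rewrite ler_wpDl // le_bigmax.
Qed.

End SupNorm.

Section WeakShiftCoords.
Variables (R : realType) (k d dt : nat) (a0 : (R[i])^o).
Variable al : {ffun 'I_k.-1 -> 'I_dt.+1} -> (R[i])^o.
Implicit Types z : 'I_k -> (R[i])^o.
Local Notation S := (weak_shift d a0 al).

Lemma coord_weak_shift_low z j : (j.+2 < k)%N -> coord (S z) j = coord z j.+1.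
Proof.
move=> j_lt; have j1_lt : (j.+1 < k)%N := ltn_trans (ltnSn _) j_lt.
rewrite (coord_lt _ (ltn_trans (ltnSn _) j1_lt)).
by rewrite /weak_shift /weak_shift_like /= j1_lt (ltn_eqF j_lt) (ltn_eqF j1_lt) addr0.
Qed.

Lemma coord_weak_shift_penult z : (1 < k)%N ->
  coord (S z) k.-2 = coord z k.-1 + coord z 1 ^+ d.-1.
Proof.
move=> k_gt1; have k2S : k.-2.+2 = k by rewrite -subn2 -addn2 subnK.
have k2_lt : (k.-2 < k)%N by rewrite -{2}k2S ltnS leqnSn.
have k21 : k.-2.+1 = k.-1 by rewrite -{2}k2S.
by rewrite (coord_lt _ k2_lt) /weak_shift /weak_shift_like /= k2S eqxx leqnn k21.
Qed.

Lemma coord_weak_shift_last z : (0 < k)%N ->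
  coord (S z) k.-1 = a0 * coord z 0 + pval al z + \sum_(1 <= j < k) coord z j ^+ d.
Proof.
move=> k_gt0; have k1S : k.-1.+1 = k := prednK k_gt0.
have k1_lt : (k.-1 < k)%N by rewrite ltn_predL.
rewrite (coord_lt _ k1_lt).
by rewrite /weak_shift /weak_shift_like /= k1S ltnn eqxx (gtn_eqF (ltnSn _)).
Qed.

Lemma normc_pval_le z M : (forall e, normc (al e) <= M) ->
  normc (pval al z) <= #|{ffun 'I_k.-1 -> 'I_dt.+1}|%:R * M * xnorm z ^+ ws_deg a0 al.
Proof.
move=> al_le; have X_ge1 := xnorm_ge1 z.
have monomial_le e : normc (al e * \prod_(i : 'I_k.-1) coord z (val i).+1 ^+ e i)
    <= M * xnorm z ^+ ws_deg a0 al.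
  have M_ge0 : 0 <= M := le_trans (normc_ge0 _) (al_le e).
  rewrite normcM normc_prod; have [->|al_neq0] := eqVneq (al e) 0.
    by rewrite normc0 mul0r mulr_ge0 // exprn_ge0 // ltW // xnorm_gt0.
  apply: ler_pM => //; first exact: normc_ge0.
    by apply: prodr_ge0 => i _; apply: normc_ge0.
  apply: (@le_trans _ _ (\prod_(i : 'I_k.-1) xnorm z ^+ e i)).
    apply: ler_prod => i _; rewrite normcX exprn_ge0 ?normc_ge0 //=.
    by rewrite lerXn2r ?nnegrE ?normc_ge0 ?normc_coord_le_xnorm // ltW ?xnorm_gt0.
  rewrite -(big_morph _ (exprD (xnorm z)) (expr0 (xnorm z))) ler_weXn2l //.
  apply: leq_trans (leq_maxr _ _).
  exact: (@leq_bigmax_cond _ (fun e => al e != 0) (fun e => \sum_i val (e i)) e).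
rewrite /pval; apply: le_trans (normc_sum_le _ _ _) _.
by apply: le_trans (ler_sum _ (fun e _ => monomial_le e)) _; rewrite sumr_const -mulrA mulr_natl.
Qed.

End WeakShiftCoords.

Section Trap.
Variables (R : realType) (k d dt : nat) (Mt : R).
Hypotheses (k_ge3 : (3 <= k)%N) (dt_gt0 : (0 < dt)%N) (d_ge : (dt.+2 <= d)%N).
Hypothesis Mt_gt0 : 0 < Mt.
Implicit Types z : 'I_k -> (R[i])^o.

Definition shift_like_bound : R := (1 + #|{ffun 'I_k.-1 -> 'I_dt.+1}|%:R) * Mt.
Definition trap_radius : R := 16 * k%:R + 4 * shift_like_bound + 2.
Definition growth_const : R := shift_like_bound + k%:R + 2.
Definition exit_const : R := trap_radius + 8 * k%:R.

Definition in_trap z : Prop :=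
  trap_radius <= normc (coord z k.-1) /\
  forall j, (j < k.-1)%N -> 4 * k%:R * normc (coord z j) <= normc (coord z k.-1).

Variables (a0 : (R[i])^o) (al : {ffun 'I_k.-1 -> 'I_dt.+1} -> (R[i])^o).
Hypotheses (a0_lt : normc a0 < Mt) (al_lt : forall e, normc (al e) < Mt).
Hypothesis al_deg : ws_deg a0 al = dt.
Local Notation S := (weak_shift d a0 al).

Let k_gt0 : (0 < k)%N. Proof. exact: leq_trans k_ge3. Qed.
Let d_ge3 : (3 <= d)%N. Proof. exact: leq_trans d_ge. Qed.
Let dpred_ge2 : (2 <= d.-1)%N. Proof. by rewrite -ltnS prednK // (leq_trans _ d_ge3). Qed.
Let k_ge1 : (1 : R) <= k%:R. Proof. by rewrite ler1n. Qed.
Let bound_ge0 : 0 <= shift_like_bound.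
Proof. by rewrite mulr_ge0 ?addr_ge0 // ltW. Qed.

Lemma growth_const_ge1 : 1 <= growth_const.
Proof. by rewrite /growth_const; have := bound_ge0; have := ler0n R k; lra. Qed.

Lemma exit_const_ge1 : 1 <= exit_const.
Proof. by rewrite /exit_const /trap_radius; have := bound_ge0; have := ler0n R k; lra. Qed.

Lemma normc_shift_like_le z :
  normc (a0 * coord z 0 + pval al z) <= shift_like_bound * xnorm z ^+ dt.
Proof.
have X_ge1 := xnorm_ge1 z.
have a0_term : normc (a0 * coord z 0) <= Mt * xnorm z ^+ dt.
  rewrite normcM; apply: ler_pM; [exact: normc_ge0 | exact: normc_ge0 | exact: ltW |].
  by apply: le_trans (normc_coord_le_xnorm _ _) _; rewrite -{1}[xnorm z]expr1 ler_weXn2l.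
have := normc_pval_le a0 z (fun e => ltW (al_lt e)); rewrite al_deg => pval_term.
apply: le_trans (le_normcD _ _) _.
by rewrite /shift_like_bound mulrDl mul1r mulrDl lerD.
Qed.

Lemma normc_weak_shift_low z j : (j < k.-1)%N ->
  normc (coord (S z) j) <= 2 * xnorm z ^+ d.-1.
Proof.
move=> j_lt; have X_ge1 := xnorm_ge1 z.
have X_le : xnorm z <= xnorm z ^+ d.-1.
  by rewrite -{1}[xnorm z]expr1 ler_weXn2l // (leq_trans _ dpred_ge2).
have := normc_coord_le_xnorm z.
case: (ltnP j.+1 k.-1) => [j1_lt|j1_ge] coord_le.
  rewrite coord_weak_shift_low; last by rewrite -ltn_predRL.
  by apply: le_trans (coord_le _) _; lra.
have /eqP j1_eq : j.+1 == k.-1 by rewrite eqn_leq j_lt j1_ge.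
have -> : j = k.-2 by rewrite -j1_eq.
rewrite coord_weak_shift_penult; last exact: leq_trans k_ge3.
apply: le_trans (le_normcD _ _) _; rewrite normcX.
have : normc (coord z 1) ^+ d.-1 <= xnorm z ^+ d.-1.
  by rewrite lerXn2r ?nnegrE ?normc_ge0 ?coord_le // ltW ?xnorm_gt0.
by have := coord_le k.-1; lra.
Qed.

Lemma normc_weak_shift_last_le z :
  normc (coord (S z) k.-1) <= (shift_like_bound + k%:R) * xnorm z ^+ d.
Proof.
have X_ge1 := xnorm_ge1 z; have X_gt0 := xnorm_gt0 z.
have coordX_le j : normc (coord z j ^+ d) <= xnorm z ^+ d.
  by rewrite normcX lerXn2r ?nnegrE ?normc_ge0 ?normc_coord_le_xnorm // ltW.
rewrite coord_weak_shift_last // mulrDl; apply: le_trans (le_normcD _ _) _; apply: lerD.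
  apply: le_trans (normc_shift_like_le z) _; rewrite ler_wpM2l // ler_weXn2l //.
  exact: leq_trans (leqnSn _) (ltnW d_ge).
apply: le_trans (normc_sum_le _ _ _) _.
apply: le_trans (ler_sum _ (fun j _ => coordX_le j)) _.
by rewrite sumr_const_nat -[_ *+ _]mulr_natl ler_wpM2r ?ler_nat ?leq_subr // exprn_ge0 // ltW.
Qed.

Lemma xnorm_weak_shift_le z : xnorm (S z) <= growth_const * xnorm z ^+ d.
Proof.
have X_ge1 := xnorm_ge1 z; set X := xnorm z in X_ge1 *.
have Xd_ge1 : 1 <= X ^+ d by rewrite exprn_ege1.
have Xd1_le : X ^+ d.-1 <= X ^+ d by rewrite ler_weXn2l // leq_pred.
have := bound_ge0; have := k_ge1; rewrite /growth_const => ? ?.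
apply: xnorm_le; first by nra.
  apply: le_trans (normc_weak_shift_last_le z) _; rewrite -/X; nra.
move=> j j_lt; apply: le_trans (normc_weak_shift_low z j_lt) _; rewrite -/X; nra.
Qed.

Lemma xnorm_weak_shift_notin_trap z :
  ~ in_trap (S z) -> xnorm (S z) <= exit_const * xnorm z ^+ d.-1.
Proof.
move=> notin; set Y := xnorm z ^+ d.-1.
have Y_ge1 : 1 <= Y by rewrite exprn_ege1 // xnorm_ge1.
have low_le j : (j < k.-1)%N -> normc (coord (S z) j) <= 2 * Y := @normc_weak_shift_low z j.
have := bound_ge0; have := k_ge1; rewrite /exit_const /trap_radius => ? ?.
have last_le : normc (coord (S z) k.-1) <= exit_const * Y.
  rewrite /exit_const /trap_radius.
  have [small|large] := ltP (normc (coord (S z) k.-1)) trap_radius.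
    by move: small; rewrite /trap_radius; nra.
  have [j j_lt lt_j] : exists2 j, (j < k.-1)%N &
      normc (coord (S z) k.-1) < 4 * k%:R * normc (coord (S z) j).
    apply: contrapT => none; apply: notin; split => // j j_lt.
    by rewrite leNgt; apply/negP => lt_j; apply: none; exists j.
  by have := low_le j j_lt; nra.
by apply: xnorm_le => // [|j /low_le]; nra.
Qed.

Lemma xnorm_in_trap z : in_trap z -> xnorm z = normc (coord z k.-1).
Proof.
case; set U := normc (coord z k.-1) => U_ge low_le.
have := bound_ge0; have := k_ge1; move: U_ge; rewrite /trap_radius => ? ? ?.
apply/le_anti; rewrite normc_coord_le_xnorm andbT.
apply: xnorm_le => //; first by lra.
by move=> j /low_le; have := normc_ge0 (coord z j); nra.
Qed.

Lemma trap_shift_like_le z : in_trap z ->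
  4 * normc (a0 * coord z 0 + pval al z) <= normc (coord z k.-1) ^+ d.
Proof.
move=> zT; have [U_ge _] := zT; rewrite -(xnorm_in_trap zT) in U_ge *.
have X_ge1 := xnorm_ge1 z; set X := xnorm z in U_ge X_ge1 *.
have Xdt_ge0 : 0 <= X ^+ dt := exprn_ge0 dt (le_trans ler01 X_ge1).
apply: le_trans (_ : 4 * (shift_like_bound * X ^+ dt) <= _).
  by rewrite ler_wpM2l // normc_shift_like_le.
apply: le_trans (_ : X ^+ 2 * X ^+ dt <= _); last first.
  by rewrite -exprD ler_weXn2l // addnC.
rewrite mulrA ler_wpM2r // expr2; have := bound_ge0; have := k_ge1.
by move: U_ge; rewrite /trap_radius; nra.
Qed.

Lemma trap_low_powers_le z : in_trap z ->
  4 * normc (\sum_(1 <= j < k.-1) coord z j ^+ d) <= normc (coord z k.-1) ^+ d.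
Proof.
case=> _; set U := normc (coord z k.-1) => low_le.
have k_gt0' : (0 : R) < k%:R by rewrite ltr0n.
have term_le j : (j < k.-1)%N -> 4 * k%:R * normc (coord z j ^+ d) <= U ^+ d.
  move=> /low_le; rewrite normcX; set x := normc (coord z j) => x_le.
  have x_ge0 : 0 <= x := normc_ge0 _.
  apply: le_trans (_ : (4 * k%:R * x) ^+ d <= _); last first.
    by rewrite lerXn2r ?nnegrE ?mulr_ge0 // (le_trans _ x_le) // mulr_ge0.
  rewrite exprMn ler_wpM2r ?exprn_ge0 // -{1}[4 * k%:R]expr1 ler_weXn2l //.
    by have := k_ge1; lra.
  exact: leq_trans d_ge3.
rewrite -(ler_pM2l k_gt0') mulrA [k%:R * 4]mulrC.
apply: le_trans (_ : 4 * k%:R * \sum_(1 <= j < k.-1) normc (coord z j ^+ d) <= _).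
  by rewrite ler_wpM2l ?mulr_ge0 // normc_sum_le.
rewrite mulr_sumr; apply: le_trans (_ : \sum_(1 <= j < k.-1) U ^+ d <= _).
  by apply: ler_sum_nat => j /andP[_ j_lt]; apply: term_le.
rewrite sumr_const_nat -[_ *+ _]mulr_natl ler_wpM2r ?exprn_ge0 ?normc_ge0 // ler_nat.
by rewrite (leq_trans (leq_subr _ _)) ?leq_pred.
Qed.

Lemma normc_weak_shift_last_sub z : in_trap z ->
  normc (coord (S z) k.-1 - coord z k.-1 ^+ d) <= normc (coord z k.-1) ^+ d / 2.
Proof.
move=> zT.
have -> : coord (S z) k.-1 - coord z k.-1 ^+ d =
    a0 * coord z 0 + pval al z + \sum_(1 <= j < k.-1) coord z j ^+ d.
  rewrite coord_weak_shift_last // (@big_nat_recr_pred _ 1 k) ?(leq_trans _ k_ge3) //.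
  by rewrite addrA addrK.
apply: le_trans (le_normcD _ _) _.
by have := trap_shift_like_le zT; have := trap_low_powers_le zT; lra.
Qed.

Lemma weak_shift_last_in_trap z : in_trap z ->
  normc (coord z k.-1) ^+ d / 2 <= normc (coord (S z) k.-1) <= 2 * normc (coord z k.-1) ^+ d.
Proof.
move=> zT; have := normc_weak_shift_last_sub zT.
set w := coord (S z) k.-1; set u := coord z k.-1.
have := le_normcD (w - u ^+ d) (u ^+ d); rewrite subrK normcX.
have := le_normcD w (u ^+ d - w); rewrite addrC subrK normcX normcB.
have := exprn_ge0 d (normc_ge0 u).
by move=> ? ? ? ?; apply/andP; split; lra.
Qed.

Let trap_last_facts z : in_trap z ->
  [/\ 16 * k%:R + 2 <= normc (coord z k.-1),
       normc (coord z k.-1) <= normc (coord z k.-1) ^+ d.-1 &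
       normc (coord z k.-1) * normc (coord z k.-1) ^+ d.-1 / 2 <= normc (coord (S z) k.-1)].
Proof.
move=> zT; have [U_ge _] := zT; have /andP[w_ge _] := weak_shift_last_in_trap zT.
set U := normc (coord z k.-1) in U_ge w_ge *.
have U_ge' : 16 * k%:R + 2 <= U.
  by move: U_ge; rewrite /trap_radius; have := bound_ge0; lra.
split => //; last by rewrite -exprS prednK // (leq_trans _ d_ge3).
by rewrite -{1}[U]expr1 ler_weXn2l ?(leq_trans _ dpred_ge2) //; have := k_ge1; lra.
Qed.

Lemma in_trap_weak_shift z : in_trap z -> in_trap (S z).
Proof.
move=> zT; have [U_ge _] := zT; have [U_ge' Y_ge w_ge] := trap_last_facts zT.
have := normc_weak_shift_low z; rewrite (xnorm_in_trap zT).
set U := normc (coord z k.-1) in U_ge U_ge' Y_ge w_ge *; set Y := U ^+ d.-1 in Y_ge w_ge *.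
move=> low_le; have := k_ge1; split; first by nra.
by move=> j /low_le; nra.
Qed.

Lemma in_trap_last_growth z : in_trap z ->
  normc (coord z k.-1) + 1 <= normc (coord (S z) k.-1).
Proof.
move=> zT; have [U_ge' Y_ge w_ge] := trap_last_facts zT.
by have := k_ge1; nra.
Qed.

Lemma normc_ratio_in_trap z j : in_trap z -> (j < k.-1)%N ->
  normc (coord (S z) j / coord (S z) k.-1) <= 4 / normc (coord z k.-1).
Proof.
move=> zT j_lt; have [U_ge' Y_ge w_ge] := trap_last_facts zT.
have := normc_weak_shift_low z j_lt; rewrite (xnorm_in_trap zT).
set U := normc (coord z k.-1) in U_ge' Y_ge w_ge *; set Y := U ^+ d.-1 in Y_ge w_ge *.
move=> wj_le; have U_gt0 : 0 < U by have := k_ge1; lra.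
have w_gt0 : 0 < normc (coord (S z) k.-1) by apply: lt_le_trans w_ge; nra.
rewrite normcM normcV ler_pdivrMr //; apply: le_trans wj_le _.
have -> : 2 * Y = 4 / U * (U * Y / 2) by field; rewrite gt_eqF.
by rewrite ler_wpM2l // divr_ge0 // ltW.
Qed.

End Trap.

Section Orbit.
Variables (R : realType) (k d dt : nat) (Mt : R).
Variables (a : nat -> (R[i])^o) (alpha : nat -> {ffun 'I_k.-1 -> 'I_dt.+1} -> (R[i])^o).
Hypotheses (k_ge3 : (3 <= k)%N) (dt_gt0 : (0 < dt)%N) (d_ge : (dt.+2 <= d)%N).
Hypothesis Mt_gt0 : 0 < Mt.
Hypothesis a_lt : forall n, (0 < n)%N -> normc (a n) < Mt.
Hypothesis alpha_lt : forall n e, (0 < n)%N -> normc (alpha n e) < Mt.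
Hypothesis alpha_deg : forall n, (0 < n)%N -> ws_deg (a n) (alpha n) = dt.
Variable z : 'I_k -> (R[i])^o.
Local Notation S := (fun n => weak_shift d (a n) (alpha n)).
Local Notation orbit n := (comp_seq S n z).
Local Notation T := (in_trap dt Mt).
Local Notation U n := (normc (coord (orbit n) k.-1)).

Let a_succ n : normc (a n.+1) < Mt := a_lt (ltn0Sn n).
Let alpha_succ n e : normc (alpha n.+1 e) < Mt := alpha_lt e (ltn0Sn n).
Let deg_succ n : ws_deg (a n.+1) (alpha n.+1) = dt := alpha_deg (ltn0Sn n).

Lemma orbit_in_trap_succ n : T (orbit n) -> T (orbit n.+1).
Proof. exact: (in_trap_weak_shift k_ge3 dt_gt0 d_ge Mt_gt0 (a_succ n) (alpha_succ n) (deg_succ n)). Qed.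

Lemma orbit_in_trap_from n0 : T (orbit n0) -> forall i, T (orbit (i + n0)%N).
Proof.
move=> T0; elim=> [|i IH]; first by rewrite add0n.
by rewrite addSn; apply: orbit_in_trap_succ.
Qed.

Lemma renormalized_orbit_cvg : exists L : R,
  (fun n => Gn S d n z) @ \oo --> L /\
  (forall n, `|Gn S d n z - L| <= ((d%:R - 1) / d%:R) ^+ n *
     (ln (xnorm z) + ln (growth_const k dt Mt) + ln (exit_const k dt Mt) + ln 2)) /\
  ((forall n, ~ T (orbit n)) -> L = 0).
Proof.
have d_ge3 : (3 <= d)%N := leq_trans (dt_gt0 : (3 <= dt.+2)%N) d_ge.
have C_ge1 := growth_const_ge1 k dt Mt_gt0; have D_ge1 := exit_const_ge1 k dt Mt_gt0.
have T_succ n : `[< T (orbit n) >] -> `[< T (orbit n.+1) >].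
  by move=> /asboolP /orbit_in_trap_succ /asboolP.
have lam_succ_le n : ln (xnorm (orbit n.+1)) <=
    ln (growth_const k dt Mt) + d%:R * ln (xnorm (orbit n)).
  apply: ln_le_lnM_expr; rewrite ?xnorm_gt0 ?(lt_le_trans ltr01 C_ge1) //.
  exact: (xnorm_weak_shift_le k_ge3 dt_gt0 d_ge Mt_gt0 (a_succ n) (alpha_succ n) (deg_succ n)).
have lam_succ_notT n : ~~ `[< T (orbit n.+1) >] -> ln (xnorm (orbit n.+1)) <=
    ln (exit_const k dt Mt) + (d%:R - 1) * ln (xnorm (orbit n)).
  move=> /asboolPn notT.
  have := xnorm_weak_shift_notin_trap k_ge3 dt_gt0 d_ge Mt_gt0 notT.
  move=> /ln_le_lnM_expr -/(_ (lt_le_trans ltr01 D_ge1) (xnorm_gt0 _) (xnorm_gt0 _)).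
  by rewrite -subn1 natrB // (leq_trans _ d_ge3).
have lam_succ_T n : `[< T (orbit n) >] ->
    `|ln (xnorm (orbit n.+1)) - d%:R * ln (xnorm (orbit n))| <= ln 2.
  move=> /asboolP Tn; have Tn1 := orbit_in_trap_succ Tn.
  rewrite (xnorm_in_trap k_ge3 Mt_gt0 Tn) (xnorm_in_trap k_ge3 Mt_gt0 Tn1).
  apply: ln_dist_expr; first by rewrite -(xnorm_in_trap k_ge3 Mt_gt0 Tn) xnorm_gt0.
  exact: (weak_shift_last_in_trap k_ge3 dt_gt0 d_ge Mt_gt0 (a_succ n) (alpha_succ n) (deg_succ n) Tn).
have [L [GL [GLb L0]]] := @renorm_cvg R d (fun n => ln (xnorm (orbit n)))
  (fun n => `[< T (orbit n) >]) _ _ _ d_ge3 (ln_ge0 C_ge1) (ln_ge0 D_ge1) (ln_ge0 (ler1n R 2))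
  (fun n => ln_ge0 (xnorm_ge1 _)) T_succ lam_succ_le lam_succ_notT lam_succ_T.
have Gn_ln n : Gn S d n z = (d%:R ^+ n)^-1 * ln (xnorm (orbit n)).
  by rewrite /Gn logp_sup_norm.
exists L; split; last split.
- by have -> : (fun n => Gn S d n z) = _ := funext Gn_ln.
- by move=> n; rewrite Gn_ln.
- by move=> notT; apply: L0 => n; apply/asboolPn.
Qed.

Lemma trapped_orbit_Uplus : (exists n, T (orbit n)) -> Uplus S z.
Proof.
move=> [n0 T0]; have T_from := orbit_in_trap_from T0.
have U_grow i : i.+1%:R <= U (i + n0)%N.
  elim: i => [|i IH]; first by rewrite -(xnorm_in_trap k_ge3 Mt_gt0 (T_from 0)) xnorm_ge1.
  rewrite addSn -natr1; apply: le_trans (in_trap_last_growth k_ge3 dt_gt0 d_ge Mt_gt0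
    (a_succ _) (alpha_succ _) (deg_succ _) (T_from i)).
  by rewrite lerD2r.
have U_gt0 i : 0 < U (i + n0)%N := lt_le_trans (ltr0Sn _ _) (U_grow i).
have U_inv_cvg : (fun i => (U (i + n0)%N)^-1) @ \oo --> 0.
  apply: (@squeeze_cvgr _ _ _ _ (cst 0) harmonic); last exact: cvg_harmonic.
    apply: nearW => i /=; rewrite invr_ge0 ltW //=.
    by rewrite lef_pV2 ?posrE ?ltr0Sn.
  exact: cvg_cst.
split; [|split].
- apply: filterS (nbhs_infty_ge n0) => n n0_le.
  have := U_gt0 (n - n0)%N; rewrite subnK //.
  by apply: contraTneq => ->; rewrite normc0 ltxx.
- move=> j j_neq; have j_lt : (j < k.-1)%N.
    by rewrite ltn_neqAle j_neq -ltnS prednK ?ltn_ord // (leq_trans _ k_ge3).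
  rewrite -(cvg_shiftn n0.+1); apply: (@cvg0_normc _ _ (fun i => 4 * (U (i + n0)%N)^-1)).
    by rewrite -(mulr0 4); apply: cvgMl_tmp.
  move=> i; rewrite /= addnS -coord_ord.
  exact: (normc_ratio_in_trap k_ge3 dt_gt0 d_ge Mt_gt0 (a_succ _) (alpha_succ _) (deg_succ _) (T_from i) j_lt).
- rewrite -(cvg_shiftn n0); apply: (@cvg0_normc _ _ (fun i => (U (i + n0)%N)^-1)) => // i.
  by rewrite /= normcV.
Qed.
End Orbit.

Unset Implicit Arguments.

Theorem lemma3p9 (R : realType) (k d dt : nat) (a : nat -> (R[i])^o)
  (alpha : nat -> {ffun 'I_k.-1 -> 'I_dt.+1} -> (R[i])^o) (mt Mt : R) :
  (3 <= k)%N -> (1 <= dt)%N -> (dt.+2 <= d)%N ->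
  0 < mt -> 0 < Mt ->
  (forall n, (0 < n)%N -> mt < ComplexField.Normc.normc (a n) < Mt) ->
  (forall n e, (0 < n)%N -> ComplexField.Normc.normc (alpha n e) < Mt) ->
  (forall n, (0 < n)%N -> ws_deg (a n) (alpha n) = dt) ->
  let S := fun n => weak_shift d (a n) (alpha n) in
  forall K : set {ptws 'I_k -> (R[i])^o}, compact K ->
  forall eps : R, 0 < eps ->
  \forall n \near \oo, forall z : 'I_k -> (R[i])^o, K z -> `|Gn S d n z - Glim S d z| < eps.
Proof.
move=> k_ge3 dt_gt0 d_ge _ Mt_gt0 a_bd alpha_lt alpha_deg S K cK eps eps_gt0.
have a_lt n : (0 < n)%N -> normc (a n) < Mt by move=> /a_bd /andP[].
have [B K_le] := compact_xnorm_bounded cK.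
pose W := ln B + ln (growth_const k dt Mt) + ln (exit_const k dt Mt) + ln 2.
have D_ge3 : (3 : R) <= d%:R by rewrite (ler_nat R 3) (leq_trans (dt_gt0 : (3 <= dt.+2)%N) d_ge).
have rhoW_cvg : (fun n => ((d%:R - 1) / d%:R) ^+ n * W) @ \oo --> (0 : R).
  rewrite -(mul0r W); apply: cvgMr_tmp; apply: cvg_expr.
  by rewrite ger0_norm ?divr_ge0 ?ltr_pdivrMr //; lra.
apply: filterS (cvgr0_norm_lt _ rhoW_cvg _ eps_gt0) => n /= rhoW_lt z Kz.
have [L [GL [GL_le L0]]] := renormalized_orbit_cvg k_ge3 dt_gt0 d_ge Mt_gt0 a_lt alpha_lt alpha_deg z.
have -> : Glim S d z = L.
  rewrite /Glim; case: asboolP => [_|notU]; first exact: cvg_lim.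
  apply/esym/L0 => n0 T0; apply: notU.
  by apply: (trapped_orbit_Uplus k_ge3 dt_gt0 d_ge Mt_gt0 a_lt alpha_lt alpha_deg); exists n0.
apply: le_lt_trans (GL_le n) (le_lt_trans _ rhoW_lt); rewrite (le_trans _ (ler_norm _)) //.
rewrite ler_wpM2l ?exprn_ge0 ?divr_ge0 //; first lra.
rewrite /W !lerD2r ler_ln ?posrE ?xnorm_gt0 ?K_le //.
exact: lt_le_trans (xnorm_gt0 z) (K_le z Kz).
Qed.
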